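(* Let $A,B\subseteq2^\omega$ and suppose $B$ has empty interior in $2^\omega$. Regard $A,B$ also as subsets of the Baire space $\omega^\omega$. If $A\le^*_L B$ then $A\le_L B$, and if $A\le^*_W B$ then $A\le_W B$.
   Context: $2^\omega$ (Cantor space) and $\omega^\omega$ (Baire space) carry the product topologies and the metric $d(x,y)=2^{-\min\{n:x(n)\neq y(n)\}}$ ($d(x,x)=0$). For $A,B\subseteq2^\omega$: $A\le_W B$ iff $A=f^{-1}(B)$ for some continuous $f:2^\omega\to2^\omega$; $A\le_L B$ iff this holds with $f$ Lipschitz with constant $1$ (i.e. $d(f(x),f(y))\le d(x,y)$). $A\le^*_W B$ (resp. $A\le^*_L B$) means $A=f^{-1}(B)$ for some continuous (resp. $1$-Lipschitz) $f:\omega^\omega\to\omega^\omega$, with $A,B$ viewed as subsets of $\omega^\omega$. *)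

Set Implicit Arguments.

(* x and y agree on the first n coordinates, i.e. d(x,y) <= 2^{-n}
   for the metric d(x,y) = 2^{-min{n : x n <> y n}} (d(x,x)=0). *)
Definition agree {X : Type} (x y : nat -> X) (n : nat) : Prop :=
  forall i, i < n -> x i = y i.

(* Continuity w.r.t. the product topology (= metric topology of d). *)
Definition continuous {X Y : Type} (f : (nat -> X) -> (nat -> Y)) : Prop :=
  forall (x : nat -> X) (n : nat), exists m : nat,
    forall y, agree x y m -> agree (f x) (f y) n.

(* Lipschitz with constant 1: d(f x, f y) <= d(x, y).  Since d takes values in
   {0} u {2^{-k}}, this says: d(x,y) <= 2^{-n} implies d(f x, f y) <= 2^{-n}. *)
Definition lipschitz1 {X Y : Type} (f : (nat -> X) -> (nat -> Y)) : Prop :=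
  forall (x y : nat -> X) (n : nat), agree x y n -> agree (f x) (f y) n.

Definition preimage_eq {X Y : Type} (A : (nat -> X) -> Prop) (B : (nat -> Y) -> Prop)
  (f : (nat -> X) -> (nat -> Y)) : Prop :=
  forall x, A x <-> B (f x).

Definition wadge_le {X : Type} (A B : (nat -> X) -> Prop) : Prop :=
  exists f, continuous f /\ preimage_eq A B f.
Definition lip_le {X : Type} (A B : (nat -> X) -> Prop) : Prop :=
  exists f, lipschitz1 f /\ preimage_eq A B f.

Definition empty_interior {X : Type} (B : (nat -> X) -> Prop) : Prop :=
  forall (x : nat -> X) (n : nat), exists y, agree x y n /\ ~ B y.

Definition bool_to_nat (b : bool) : nat := if b then 1 else 0.
Definition to_baire (A : (nat -> bool) -> Prop) : (nat -> nat) -> Prop :=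
  fun x => exists c, A c /\ forall n, x n = bool_to_nat (c n).

(* Every sequence h in the Baire space is mapped continuously, indeed 1-Lipschitz, to a
   point of the Cantor space: copy h as long as it is 0-1 valued; at the first position n
   where h takes a value > 1, switch to a point outside B that extends the prefix of length
   n already written, which exists because B has empty interior.  The resulting map sends
   the copy of c in the Baire space back to c and every other sequence outside B, so it
   reduces the copy of B to B.  Precomposing a reduction of the copy of A to the copy of B
   with the inclusion of the Cantor space, and postcomposing with this map, gives a
   reduction of A to B of the same kind. *)
From Stdlib Require Import Arith Lia Classical ClassicalEpsilon FunctionalExtensionality.

Lemma lipschitz1_comp {X Y Z : Type} (f : (nat -> X) -> (nat -> Y))
  (g : (nat -> Y) -> (nat -> Z)) :
  lipschitz1 f -> lipschitz1 g -> lipschitz1 (fun x => g (f x)).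
Proof. intros Hf Hg x y n Hxy. apply Hg, Hf, Hxy. Qed.

Lemma continuous_comp {X Y Z : Type} (f : (nat -> X) -> (nat -> Y))
  (g : (nat -> Y) -> (nat -> Z)) :
  continuous f -> continuous g -> continuous (fun x => g (f x)).
Proof.
  intros Hf Hg x n.
  destruct (Hg (f x) n) as [m Hm]. destruct (Hf x m) as [k Hk].
  exists k. intros y Hxy. apply Hm, Hk, Hxy.
Qed.

Lemma lipschitz1_continuous {X Y : Type} (f : (nat -> X) -> (nat -> Y)) :
  lipschitz1 f -> continuous f.
Proof. intros Hf x n. exists n. intros y. apply Hf. Qed.

Lemma preimage_eq_comp {X Y Z : Type} (A : (nat -> X) -> Prop) (B : (nat -> Y) -> Prop)
  (C : (nat -> Z) -> Prop) (f : (nat -> X) -> (nat -> Y)) (g : (nat -> Y) -> (nat -> Z)) :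
  preimage_eq A B f -> preimage_eq B C g -> preimage_eq A C (fun x => g (f x)).
Proof. intros Hf Hg x. rewrite (Hf x). apply Hg. Qed.

Fixpoint first_true (p : nat -> bool) (i : nat) : option nat :=
  match i with
  | 0 => if p 0 then Some 0 else None
  | S i' =>
      match first_true p i' with
      | Some k => Some k
      | None => if p (S i') then Some (S i') else None
      end
  end.

Lemma first_true_None p i : first_true p i = None -> forall j, j <= i -> p j = false.
Proof.
  induction i as [|i IH]; simpl; intros H j Hj.
  - replace j with 0 by lia. destruct (p 0); congruence.
  - destruct (first_true p i); [discriminate|].
    destruct (Nat.eq_dec j (S i)) as [->|]; [destruct (p (S i)); congruence|].
    apply IH; auto; lia.
Qed.

Lemma first_true_Some p i k : first_true p i = Some k ->
  k <= i /\ p k = true /\ forall j, j < k -> p j = false.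
Proof.
  revert k; induction i as [|i IH]; simpl; intros k H.
  - destruct (p 0) eqn:E; inversion H; subst. repeat split; auto; lia.
  - destruct (first_true p i) eqn:F.
    + inversion H; subst. destruct (IH k eq_refl) as [? [? ?]]. repeat split; auto; lia.
    + destruct (p (S i)) eqn:E; inversion H; subst. repeat split; auto.
      intros j Hj. apply (first_true_None p i F). lia.
Qed.

Lemma first_true_least p k : p k = true -> (forall j, j < k -> p j = false) ->
  forall i, first_true p i = if i <? k then None else Some k.
Proof.
  intros Hk Hlt i. induction i as [|i IH]; simpl.
  - destruct k as [|k]; simpl; [now rewrite Hk|]. rewrite Hlt; auto; lia.
  - rewrite IH. destruct (Nat.ltb_spec i k), (Nat.ltb_spec (S i) k); try lia; auto.
    + rewrite Hlt; auto.
    + assert (k = S i) as -> by lia. now rewrite Hk.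
Qed.

Lemma first_true_ext p q i : (forall j, j <= i -> p j = q j) ->
  first_true p i = first_true q i.
Proof.
  induction i as [|i IH]; simpl; intros H.
  - now rewrite H.
  - rewrite IH by (intros; apply H; lia). now rewrite H.
Qed.

Definition baire_of (c : nat -> bool) : nat -> nat := fun n => bool_to_nat (c n).

Lemma baire_of_lipschitz1 : lipschitz1 baire_of.
Proof. intros c c' n H i Hi. unfold baire_of. now rewrite H. Qed.

Lemma baire_of_inj c c' : baire_of c = baire_of c' -> c = c'.
Proof.
  intros H. apply functional_extensionality. intros n.
  apply (f_equal (fun h => h n)) in H. unfold baire_of in H.
  destruct (c n), (c' n); simpl in H; congruence.
Qed.

Lemma to_baire_baire_of (A : (nat -> bool) -> Prop) c : to_baire A (baire_of c) <-> A c.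
Proof.
  split.
  - intros [c' [Hc' E]]. replace c with c'; auto.
    apply baire_of_inj, functional_extensionality. intros n. symmetry. apply E.
  - intros Hc. now exists c.
Qed.

Section CantorRetract.

Variable B : (nat -> bool) -> Prop.
Hypothesis B_empty_interior : empty_interior B.

Definition escape (z : nat -> bool) (n : nat) : nat -> bool :=
  proj1_sig (constructive_indefinite_description _ (B_empty_interior z n)).

Lemma escape_spec z n : agree z (escape z n) n /\ ~ B (escape z n).
Proof. unfold escape. now destruct constructive_indefinite_description. Qed.

Definition non_binary (h : nat -> nat) (j : nat) : bool := 1 <? h j.

(* Truncated to length [n] so that [escape] is applied to a point depending only on
   [h] below [n]. *)
Definition binary_prefix (h : nat -> nat) (n : nat) : nat -> bool :=
  fun j => if j <? n then h j =? 1 else false.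

Definition cantor_retract (h : nat -> nat) : nat -> bool := fun i =>
  match first_true (non_binary h) i with
  | None => h i =? 1
  | Some n => escape (binary_prefix h n) n i
  end.

Lemma cantor_retract_lipschitz1 : lipschitz1 cantor_retract.
Proof.
  intros h h' n H i Hi. unfold cantor_retract.
  assert (Hle : forall j, j <= i -> h j = h' j) by (intros; apply H; lia).
  rewrite (first_true_ext (non_binary h) (non_binary h') i)
    by (intros j Hj; unfold non_binary; now rewrite Hle).
  destruct (first_true (non_binary h') i) as [k|] eqn:F.
  - destruct (first_true_Some _ _ _ F) as [Hk _].
    replace (binary_prefix h k) with (binary_prefix h' k); auto.
    apply functional_extensionality. intros j. unfold binary_prefix.
    destruct (Nat.ltb_spec j k); auto. rewrite Hle; auto; lia.
  - now rewrite Hle.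
Qed.

Lemma cantor_retract_binary h : (forall i, h i <= 1) -> baire_of (cantor_retract h) = h.
Proof.
  intros Hh. apply functional_extensionality. intros i. unfold baire_of, cantor_retract.
  destruct (first_true (non_binary h) i) as [k|] eqn:F.
  - destruct (first_true_Some _ _ _ F) as [_ [Hk _]].
    apply Nat.ltb_lt in Hk. specialize (Hh k). lia.
  - specialize (Hh i). destruct (h i) as [|[|]]; simpl; auto; lia.
Qed.

Lemma cantor_retract_non_binary h j : 1 < h j -> ~ B (cantor_retract h).
Proof.
  intros Hj.
  destruct (first_true (non_binary h) j) as [k|] eqn:F.
  2:{ pose proof (first_true_None _ _ F j (le_n j)) as E.
       unfold non_binary in E. apply Nat.ltb_ge in E. lia. }
  destruct (first_true_Some _ _ _ F) as [_ [Hk Hlt]].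
  destruct (escape_spec (binary_prefix h k) k) as [Hagree Hout].
  replace (cantor_retract h) with (escape (binary_prefix h k) k); auto.
  apply functional_extensionality. intros i. unfold cantor_retract.
  rewrite (first_true_least _ k Hk Hlt i).
  destruct (Nat.ltb_spec i k) as [Hi|]; auto.
  rewrite <- Hagree by auto. unfold binary_prefix. now apply Nat.ltb_lt in Hi as ->.
Qed.

Lemma to_baire_cantor_retract : preimage_eq (to_baire B) B cantor_retract.
Proof.
  intros h. destruct (classic (exists j, 1 < h j)) as [[j Hj]|Hbin].
  - split.
    + intros [c [_ E]]. rewrite E in Hj. destruct (c j); simpl in Hj; lia.
    + intros HB. exfalso. exact (cantor_retract_non_binary h j Hj HB).
  - assert (Hle : forall i, h i <= 1).
    { intros i. apply Nat.nlt_ge. intros Hi. apply Hbin. now exists i. }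
    rewrite <- (cantor_retract_binary h Hle) at 1. apply to_baire_baire_of.
Qed.

End CantorRetract.

Theorem lemma4p1 (A B : (nat -> bool) -> Prop) :
  empty_interior B ->
  (lip_le (to_baire A) (to_baire B) -> lip_le A B) /\
  (wadge_le (to_baire A) (to_baire B) -> wadge_le A B).
Proof.
  intros HB.
  set (r := cantor_retract B HB).
  assert (Hr : lipschitz1 r) by apply cantor_retract_lipschitz1.
  assert (Hpre : forall f, preimage_eq (to_baire A) (to_baire B) f ->
                  preimage_eq A B (fun c => r (f (baire_of c)))).
  { intros f Hf. apply (preimage_eq_comp _ (to_baire B) _ (fun c => f (baire_of c)) r).
    - apply (preimage_eq_comp _ (to_baire A)); auto.
      intros c. symmetry. apply to_baire_baire_of.
    - apply to_baire_cantor_retract. }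
  split.
  - intros [f [Hf Hred]]. exists (fun c => r (f (baire_of c))). split; auto.
    apply lipschitz1_comp; auto. apply lipschitz1_comp; auto. apply baire_of_lipschitz1.
  - intros [f [Hf Hred]]. exists (fun c => r (f (baire_of c))). split; auto.
    apply continuous_comp; [apply continuous_comp|]; auto; apply lipschitz1_continuous;
      auto using baire_of_lipschitz1.
Qed.
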